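(* Let $(\Re,\oplus,\circ)$ and $(\hat S,+,\cdot)$ be commutative Krasner hyperrings with identity, and let $\phi$ be a global hyperideal reduction function and $\delta$ a global hyperideal expansion function. (i) If $\mu:\Re\to\hat S$ is a good homomorphism and $M$ is a $\phi$-$\delta$-primary hyperideal of $\hat S$, then $\mu^{-1}(M)=\Re$ or $\mu^{-1}(M)$ is a $\phi$-$\delta$-primary hyperideal of $\Re$. (ii) If $\mu:\Re\to\hat S$ is a good epimorphism and $N$ is a hyperideal of $\Re$ containing $\mathrm{Ker}(\mu)$, then $N$ is a $\phi$-$\delta$-primary hyperideal of $\Re$ if and only if $\mu(N)$ is a $\phi$-$\delta$-primary hyperideal of $\hat S$.
   Context: Krasner hyperring: $(\Re,\oplus)$ canonical hypergroup (associative commutative hyperoperation, scalar zero $0$, unique inverses, reversibility), $(\Re,\circ)$ commutative semigroup with identity $1\neq 0$ and $0$ absorbing, $\circ$ distributive over $\oplus$. Hyperideals: nonempty $N$ with $a\oplus(-b)\subseteq N$, $r\circ a\in N$; $L(\Re)$ is the set of hyperideals. A good homomorphism $\mu:\Re\to\hat S$ satisfies $\mu(a\oplus b)=\mu(a)+\mu(b)$, $\mu(a\circ b)=\mu(a)\cdot\mu(b)$, $\mu(0)=0$; a good epimorphism is a surjective one; $\mathrm{Ker}(\mu)=\mu^{-1}(0)$. A hyperideal reduction on a hyperring $\Re$ is $\phi:L(\Re)\to L(\Re)\cup\{\emptyset\}$ with $\phi(N)\subseteq N$ and monotone; a hyperideal expansion is $\delta:L(\Re)\to L(\Re)$ with $N\subseteq\delta(N)$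 and monotone. Here $\phi,\delta$ are assigned on every Krasner hyperring; $\phi$ is global if for every good homomorphism $\mu:\Re\to\hat S$ and every $M\in L(\hat S)$, $\phi(\mu^{-1}(M))=\mu^{-1}(\phi(M))$; $\delta$ is global if likewise $\delta(\mu^{-1}(M))=\mu^{-1}(\delta(M))$. A proper hyperideal $N$ is $\phi$-$\delta$-primary if $a\circ b\in N$, $a\circ b\notin\phi(N)$ imply $a\in N$ or $b\in\delta(N)$. *)

Set Implicit Arguments.

(* x \in hadd a b  is written  hadd a b x *)
Record KrasnerHyperring : Type := {
  carrier :> Type;
  hadd : carrier -> carrier -> carrier -> Prop;
  zero : carrier;
  hopp : carrier -> carrier;
  mul : carrier -> carrier -> carrier;
  one : carrier;
  hadd_nonempty : forall a b, exists x, hadd a b x;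
  hadd_assoc : forall a b c x,
    (exists y, hadd a b y /\ hadd y c x) <-> (exists y, hadd b c y /\ hadd a y x);
  hadd_comm : forall a b x, hadd a b x <-> hadd b a x;
  hadd_zero : forall a x, hadd a zero x <-> x = a;
  hopp_inv : forall a, hadd a (hopp a) zero;
  hopp_unique : forall a b, hadd a b zero -> b = hopp a;
  hadd_rev : forall a b c, hadd a b c -> hadd c (hopp b) a;
  mul_assoc : forall a b c, mul a (mul b c) = mul (mul a b) c;
  mul_comm : forall a b, mul a b = mul b a;
  mul_one : forall a, mul one a = a;
  one_neq_zero : one <> zero;
  mul_zero : forall a, mul zero a = zero;
  mul_hadd : forall a b c x,
    (exists y, hadd b c y /\ x = mul a y) <-> hadd (mul a b) (mul a c) x
}.

Arguments hadd {k}.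
Arguments zero {k}.
Arguments hopp {k}.
Arguments mul {k}.
Arguments one {k}.

Definition hsubset {R : KrasnerHyperring} (A B : R -> Prop) : Prop :=
  forall x, A x -> B x.

Definition hyperideal (R : KrasnerHyperring) (N : R -> Prop) : Prop :=
  (exists x, N x) /\
  (forall a b, N a -> N b -> forall x, hadd a (hopp b) x -> N x) /\
  (forall r a, N a -> N (mul r a)).

Definition proper (R : KrasnerHyperring) (N : R -> Prop) : Prop :=
  exists x, ~ N x.

Definition hyperideal_reduction
  (phi : forall R : KrasnerHyperring, (R -> Prop) -> (R -> Prop)) : Prop :=
  forall R : KrasnerHyperring,
    (forall N, hyperideal R N ->
       ((forall x, ~ phi R N x) \/ hyperideal R (phi R N)) /\ hsubset (phi R N) N) /\
    (forall N M, hyperideal R N -> hyperideal R M -> hsubset N M ->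
       hsubset (phi R N) (phi R M)).

Definition hyperideal_expansion
  (delta : forall R : KrasnerHyperring, (R -> Prop) -> (R -> Prop)) : Prop :=
  forall R : KrasnerHyperring,
    (forall N, hyperideal R N -> hyperideal R (delta R N) /\ hsubset N (delta R N)) /\
    (forall N M, hyperideal R N -> hyperideal R M -> hsubset N M ->
       hsubset (delta R N) (delta R M)).

Definition good_hom {R S : KrasnerHyperring} (mu : R -> S) : Prop :=
  (forall a b y, (exists x, hadd a b x /\ y = mu x) <-> hadd (mu a) (mu b) y) /\
  (forall a b, mu (mul a b) = mul (mu a) (mu b)) /\
  mu zero = zero.

Definition good_epi {R S : KrasnerHyperring} (mu : R -> S) : Prop :=
  good_hom mu /\ forall y, exists x, mu x = y.

Definition preimage {R S : KrasnerHyperring} (mu : R -> S) (M : S -> Prop) : R -> Prop :=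
  fun x => M (mu x).

Definition image {R S : KrasnerHyperring} (mu : R -> S) (N : R -> Prop) : S -> Prop :=
  fun y => exists x, N x /\ mu x = y.

Definition Ker {R S : KrasnerHyperring} (mu : R -> S) : R -> Prop :=
  fun x => mu x = zero.

Definition global_fun
  (phi : forall R : KrasnerHyperring, (R -> Prop) -> (R -> Prop)) : Prop :=
  forall (R S : KrasnerHyperring) (mu : R -> S), good_hom mu ->
    forall M, hyperideal S M ->
      phi R (preimage mu M) = preimage mu (phi S M).

Definition phi_delta_primary
  (phi delta : forall R : KrasnerHyperring, (R -> Prop) -> (R -> Prop))
  (R : KrasnerHyperring) (N : R -> Prop) : Prop :=
  hyperideal R N /\ proper R N /\
  forall a b, N (mul a b) -> ~ phi R N (mul a b) -> N a \/ delta R N b.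

(** Globality is exactly the statement that [phi] and [delta] commute with
    preimages, so the primary condition for [mu^-1(M)] at [a b] is the
    primary condition for [M] at [mu a, mu b]; this proves (i), and the
    converse transfer when every element of [S] is some [mu a].  For (ii),
    a hyperideal [N] containing [Ker mu] is saturated, [mu^-1(mu(N)) = N],
    by reversibility of the hyperaddition, so (ii) is the surjective case
    of the transfer applied to [M = mu(N)]. *)
From Stdlib Require Import FunctionalExtensionality PropExtensionality Classical.
Set Implicit Arguments.

Lemma hyperideal_zero (R : KrasnerHyperring) (N : R -> Prop) :
  hyperideal R N -> N zero.
Proof.
  intros [[x Nx] [Hsub _]]. exact (Hsub x x Nx Nx zero (hopp_inv _ x)).
Qed.

Lemma hyperideal_opp (R : KrasnerHyperring) (N : R -> Prop) :
  hyperideal R N -> forall a, N a -> N (hopp a).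
Proof.
  intros HN a Na. apply (proj1 (proj2 HN) zero a (hyperideal_zero HN) Na).
  apply hadd_comm, hadd_zero. reflexivity.
Qed.

Section GoodHomomorphism.

Variables (R S : KrasnerHyperring) (mu : R -> S).
Hypothesis Hmu : good_hom mu.

Lemma good_hom_opp (a : R) : mu (hopp a) = hopp (mu a).
Proof.
  destruct Hmu as [Hadd [_ Hzero]]. apply hopp_unique. rewrite <- Hzero.
  apply Hadd. exists zero. split; [apply hopp_inv | reflexivity].
Qed.

Lemma hyperideal_preimage (M : S -> Prop) :
  hyperideal S M -> hyperideal R (preimage mu M).
Proof.
  intros HM. pose proof (hyperideal_zero HM) as M0.
  destruct HM as [_ [Hsub Hmul]]. destruct Hmu as [Hadd [Hmu_mul Hzero]].
  unfold preimage. split; [| split].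
  - exists zero. rewrite Hzero. exact M0.
  - intros a b Ma Mb x Hx. apply (Hsub (mu a) (mu b) Ma Mb).
    rewrite <- good_hom_opp. apply Hadd. exists x. auto.
  - intros r a Ma. rewrite Hmu_mul. apply Hmul, Ma.
Qed.

Lemma preimage_image_Ker (N : R -> Prop) :
  hyperideal R N -> hsubset (Ker mu) N -> preimage mu (image mu N) = N.
Proof.
  intros HN HK. apply functional_extensionality. intro x.
  apply propositional_extensionality. split; [| intro Nx; exists x; auto].
  intros [n [Nn En]].
  assert (Hx_n : hadd (mu x) (mu (hopp n)) zero).
  { rewrite good_hom_opp, <- En. apply hopp_inv. }
  apply (proj1 Hmu) in Hx_n. destruct Hx_n as [z [Hz Ez]].
  assert (Nz : N z) by (apply HK; symmetry; exact Ez).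
  (* reversibility turns [z] in [x - n] into [x] in [z - (-n)] *)
  apply hadd_rev in Hz.
  exact (proj1 (proj2 HN) z (hopp n) Nz (hyperideal_opp HN _ Nn) x Hz).
Qed.

Hypothesis Hsurj : forall y, exists x, mu x = y.

Lemma hyperideal_image (N : R -> Prop) :
  hyperideal R N -> hyperideal S (image mu N).
Proof.
  intros [[x0 Nx0] [Hsub Hmul]]. destruct Hmu as [Hadd [Hmu_mul _]].
  split; [| split].
  - exists (mu x0), x0. auto.
  - intros _ _ [a [Na <-]] [b [Nb <-]] y Hy.
    rewrite <- good_hom_opp in Hy. apply Hadd in Hy.
    destruct Hy as [x [Hx ->]]. exists x.
    split; [exact (Hsub a b Na Nb x Hx) | reflexivity].
  - intros r' _ [a [Na <-]]. destruct (Hsurj r') as [r <-].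
    exists (mul r a). split; [apply Hmul, Na | apply Hmu_mul].
Qed.

End GoodHomomorphism.

Section PhiDeltaPrimary.

Variables phi delta : forall R : KrasnerHyperring, (R -> Prop) -> (R -> Prop).
Hypotheses (Hphig : global_fun phi) (Hdeltag : global_fun delta).
Variables (R S : KrasnerHyperring) (mu : R -> S).
Hypothesis Hmu : good_hom mu.
Variable M : S -> Prop.
Hypothesis HM : hyperideal S M.

Lemma primary_condition_preimage (a b : R) :
  (preimage mu M (mul a b) -> ~ phi R (preimage mu M) (mul a b) ->
     preimage mu M a \/ delta R (preimage mu M) b) <->
  (M (mul (mu a) (mu b)) -> ~ phi S M (mul (mu a) (mu b)) -> M (mu a) \/ delta S M (mu b)).
Proof.
  rewrite (Hphig Hmu HM), (Hdeltag Hmu HM). unfold preimage.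
  rewrite (proj1 (proj2 Hmu)). reflexivity.
Qed.

Lemma phi_delta_primary_preimage :
  phi_delta_primary phi delta S M -> proper R (preimage mu M) ->
  phi_delta_primary phi delta R (preimage mu M).
Proof.
  intros [_ [_ Hprimary]] Hproper.
  split; [exact (hyperideal_preimage Hmu HM) | split; [exact Hproper |]].
  intros a b. apply primary_condition_preimage, Hprimary.
Qed.

Hypothesis Hsurj : forall y, exists x, mu x = y.

Lemma phi_delta_primary_preimage_surj :
  phi_delta_primary phi delta R (preimage mu M) <-> phi_delta_primary phi delta S M.
Proof.
  split.
  - intros [_ [[x Mx] Hprimary]]. split; [exact HM | split; [exists (mu x); exact Mx |]].
    intros a' b'. destruct (Hsurj a') as [a <-], (Hsurj b') as [b <-].
    apply primary_condition_preimage, Hprimary.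
  - intros HP. apply phi_delta_primary_preimage; [exact HP |].
    destruct HP as [_ [[y My] _]]. destruct (Hsurj y) as [x <-]. exists x. exact My.
Qed.

End PhiDeltaPrimary.

Theorem mainTheorem4
  (phi delta : forall R : KrasnerHyperring, (R -> Prop) -> (R -> Prop))
  (Hphi : hyperideal_reduction phi) (Hdelta : hyperideal_expansion delta)
  (Hphig : global_fun phi) (Hdeltag : global_fun delta) :
  (forall (R S : KrasnerHyperring) (mu : R -> S), good_hom mu ->
     forall M : S -> Prop, phi_delta_primary phi delta S M ->
       (forall x, preimage mu M x) \/ phi_delta_primary phi delta R (preimage mu M)) /\
  (forall (R S : KrasnerHyperring) (mu : R -> S), good_epi mu ->
     forall N : R -> Prop, hyperideal R N -> hsubset (Ker mu) N ->
       (phi_delta_primary phi delta R N <-> phi_delta_primary phi delta S (image mu N))).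
Proof.
  split.
  - intros R S mu Hmu M HP.
    destruct (classic (forall x, preimage mu M x)) as [Hfull | Hproper];
      [left; exact Hfull | right].
    apply (phi_delta_primary_preimage Hphig Hdeltag Hmu (proj1 HP) HP).
    exact (not_all_ex_not _ _ Hproper).
  - intros R S mu [Hmu Hsurj] N HN HK.
    rewrite <- (preimage_image_Ker Hmu HN HK) at 1.
    exact (phi_delta_primary_preimage_surj Hphig Hdeltag Hmu
             (hyperideal_image Hmu Hsurj HN) Hsurj).
Qed.
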